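(* CTL*$_{cd}$ has a tree-like model property: every satisfiable CTL*$_{cd}$ state formula $\varphi$ is satisfied (i.e. $\mathcal K\models\varphi$) by some Kripke structure $\mathcal K$ that is a tree with back edges.
   Context: A Kripke structure over a finite set $AP$ of atomic propositions is a tuple $\mathcal K=(AP,W,R,L,w_I)$ where $W$ is a countable non-empty set of worlds, $w_I\in W$ is the initial world, $R\subseteq W\times W$ is a left-total transition relation (every world has at least one $R$-successor), and $L:W\to 2^{AP}$ is a labelling function. A path is an infinite sequence $\pi=\pi_0\pi_1\cdots$ of worlds with $(\pi_i,\pi_{i+1})\in R$ for all $i\in\mathbb N$; $\mathrm{Pth}(w)$ is the set of paths with $\pi_0=w$. A path $\pi$ is a cycle if for every $i\in\mathbb N$ there is $j>i$ with $\pi_j=\pi_0$ (i.e. $\pi_0$ occurs infinitely often in $\pi$); $\mathrm{Cyc}(w)$ is the set of cycles with $\pi_0=w$. Syntax of CTL*$_{cd}$: state formulas $\varphi::=p\mid\neg\varphi\mid\varphi\wedge\varphi\mid\varphi\vee\varphi\mid \mathsf E\psi\mid\mathsf A\psi\mid\mathsf E^{c}\psi\mid\mathsf A^{c}\psi$ with $p\in AP$; path formulas $\psi::=\varphi\mid\neg\psi\mid\psi\wedge\psi\mid\psi\vee\psi\mid\mathsf X\psi\mid\psi\,\mathsf U\,\psi$. Semantics: $\mathcal K,w\models p$ iff $p\in L(w)$; Boolean connectives as usual; $\mathcal K,w\models\mathsf E\psi$ iff some $\pi\in\mathrm{Pth}(w)$ has $\mathcal K,\pi,0\models\psi$; $\mathcal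 K,w\models\mathsf A\psi$ iff every $\pi\in\mathrm{Pth}(w)$ has $\mathcal K,\pi,0\models\psi$; $\mathcal K,w\models\mathsf E^{c}\psi$ iff some $\pi\in\mathrm{Cyc}(w)$ has $\mathcal K,\pi,0\models\psi$; $\mathcal K,w\models\mathsf A^{c}\psi$ iff every $\pi\in\mathrm{Cyc}(w)$ has $\mathcal K,\pi,0\models\psi$. For paths: $\mathcal K,\pi,i\models\varphi$ (state formula) iff $\mathcal K,\pi_i\models\varphi$; Boolean connectives as usual; $\mathcal K,\pi,i\models\mathsf X\psi$ iff $\mathcal K,\pi,i+1\models\psi$; $\mathcal K,\pi,i\models\psi_1\mathsf U\psi_2$ iff there is $k\ge0$ with $\mathcal K,\pi,i+k\models\psi_2$ and $\mathcal K,\pi,i+j\models\psi_1$ for all $0\le j<k$. $\mathcal K\models\varphi$ iff $\mathcal K,w_I\models\varphi$. A state formula is satisfiable if $\mathcal K\models\varphi$ for some Kripke structure $\mathcal K$. A Kripke structure $\mathcal K=(AP,W,R,L,w_I)$ is a tree with back edges if there exist a relation $R_0\subseteq W\times W$ and a partial map $f:W\to W$ such that: (i) $(W,R_0)$ is a tree with root $w_I$ ($R_0$ being the child relation); (ii) $R=R_0\cup\{(w,f(w)) : w\in\mathrm{dom}(f)\}$; (iii) for every $w\in\mathrm{dom}(f)$, $f(w)$ is an ancestor of $w$ in the tree, i.e. $(f(w),w)\in R_0^+$ (with $R_0^+$ the transitive closure of $R_0$); (iv) for all $w_1,w_2\in W$, if $f(w_1)$ is defined and $(f(w_2),w_1)\in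 R_0^+$ and $(w_1,w_2)\in R_0^+$, then $f(w_1)=f(w_2)$. *)

From Stdlib Require Import List Relations.
Set Implicit Arguments.

Record Kripke (AP : Type) := mkKripke {
  W : Type;
  R : W -> W -> Prop;
  L : W -> AP -> Prop;
  wI : W;
  W_countable : exists enc : W -> nat, forall x y, enc x = enc y -> x = y;
  R_total : forall w, exists v, R w v
}.

Arguments W {AP}.
Arguments R {AP}.
Arguments L {AP}.
Arguments wI {AP}.

Definition is_path {AP} (K : Kripke AP) (pi : nat -> W K) : Prop :=
  forall i, R K (pi i) (pi (S i)).

Definition is_cycle {AP} (K : Kripke AP) (pi : nat -> W K) : Prop :=
  is_path K pi /\ forall i, exists j, i < j /\ pi j = pi 0.

Inductive sform (AP : Type) : Type :=
| SAtom : AP -> sform AP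
| SNot : sform AP -> sform AP
| SAnd : sform AP -> sform AP -> sform AP
| SOr : sform AP -> sform AP -> sform AP
| SE : pform AP -> sform AP
| SA : pform AP -> sform AP
| SEc : pform AP -> sform AP
| SAc : pform AP -> sform AP
with pform (AP : Type) : Type :=
| PState : sform AP -> pform AP
| PNot : pform AP -> pform AP
| PAnd : pform AP -> pform AP -> pform AP
| POr : pform AP -> pform AP -> pform AP
| PX : pform AP -> pform AP
| PU : pform AP -> pform AP -> pform AP.

Fixpoint sat_state {AP} (K : Kripke AP) (w : W K) (phi : sform AP) {struct phi} : Prop :=
  match phi with
  | SAtom p => L K w p
  | SNot phi1 => ~ sat_state K w phi1
  | SAnd phi1 phi2 => sat_state K w phi1 /\ sat_state K w phi2
  | SOr phi1 phi2 => sat_state K w phi1 \/ sat_state K w phi2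
  | SE psi => exists pi, is_path K pi /\ pi 0 = w /\ sat_path K pi 0 psi
  | SA psi => forall pi, is_path K pi -> pi 0 = w -> sat_path K pi 0 psi
  | SEc psi => exists pi, is_cycle K pi /\ pi 0 = w /\ sat_path K pi 0 psi
  | SAc psi => forall pi, is_cycle K pi -> pi 0 = w -> sat_path K pi 0 psi
  end
with sat_path {AP} (K : Kripke AP) (pi : nat -> W K) (i : nat) (psi : pform AP)
  {struct psi} : Prop :=
  match psi with
  | PState phi => sat_state K (pi i) phi
  | PNot psi1 => ~ sat_path K pi i psi1
  | PAnd psi1 psi2 => sat_path K pi i psi1 /\ sat_path K pi i psi2
  | POr psi1 psi2 => sat_path K pi i psi1 \/ sat_path K pi i psi2
  | PX psi1 => sat_path K pi (S i) psi1
  | PU psi1 psi2 =>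
      exists k, sat_path K pi (i + k) psi2 /\
                (forall j, j < k -> sat_path K pi (i + j) psi1)
  end.

Definition models {AP} (K : Kripke AP) (phi : sform AP) : Prop :=
  sat_state K (wI K) phi.

Definition satisfiable {AP} (phi : sform AP) : Prop :=
  exists K : Kripke AP, models K phi.

Definition is_rooted_tree {X : Type} (R0 : X -> X -> Prop) (r : X) : Prop :=
  (forall w, ~ R0 w r) /\
  (forall w, w <> r -> exists! p, R0 p w) /\
  (forall w, clos_refl_trans X R0 r w).

Definition tree_with_back_edges {AP} (K : Kripke AP) : Prop :=
  exists (R0 : W K -> W K -> Prop) (f : W K -> option (W K)),
    is_rooted_tree R0 (wI K) /\
    (forall u v, R K u v <-> (R0 u v \/ f u = Some v)) /\
    (forall w v, f w = Some v -> clos_trans (W K) R0 v w) /\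
    (forall w1 w2 v1 v2, f w1 = Some v1 -> f w2 = Some v2 ->
        clos_trans (W K) R0 v2 w1 -> clos_trans (W K) R0 w1 w2 -> v1 = v2).

(* Unfold a model K from its initial world into the tree of finite walks, where
   every step carries a flag saying whether it opens a cycle segment; a walk gets
   a back edge to the walk just before its most recent opening step whenever K has
   the corresponding edge. These back edges are nested, since all walks strictly
   between a back edge's target and source share the same most recent opening step.
   Projecting a walk to its last world preserves labels and edges, every path of K
   lifts to the tree, and every cycle of K lifts to a cycle by unrolling each loop
   from its base node: open at the first step, close with a back edge on returning.
   Hence the projection preserves every CTL*_cd formula. *)

From Stdlib Require Import List Relations Setoid Lia PeanoNat.
From Stdlib Require Import ClassicalEpsilon ProofIrrelevance FunctionalExtensionality.
From Stdlib Require Cantor.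

Scheme sform_mind := Induction for sform Sort Prop
with pform_mind := Induction for pform Sort Prop.

Section SatTransfer.
Context {AP : Type} (K1 K2 : Kripke AP) (g : W K1 -> W K2).

Definition lifts_along (P1 : (nat -> W K1) -> Prop) (P2 : (nat -> W K2) -> Prop) : Prop :=
  forall u pi, P2 pi -> pi 0 = g u ->
  exists pi', P1 pi' /\ pi' 0 = u /\ forall i, g (pi' i) = pi i.

Hypothesis g_label : forall u p, L K1 u p <-> L K2 (g u) p.
Hypothesis g_edge : forall u v, R K1 u v -> R K2 (g u) (g v).
Hypothesis g_lifts_paths : lifts_along (is_path K1) (is_path K2).
Hypothesis g_lifts_cycles : lifts_along (is_cycle K1) (is_cycle K2).

Lemma is_path_map pi : is_path K1 pi -> is_path K2 (fun i => g (pi i)).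
Proof. intros Hpi i. apply g_edge, Hpi. Qed.

Lemma is_cycle_map pi : is_cycle K1 pi -> is_cycle K2 (fun i => g (pi i)).
Proof.
  intros [Hpi Hret]. split; [now apply is_path_map|].
  intros i. destruct (Hret i) as [j [Hij Hj]]. exists j. now rewrite Hj.
Qed.

Section Quantifiers.
Variables (P1 Q1 : (nat -> W K1) -> Prop) (P2 Q2 : (nat -> W K2) -> Prop).
Hypothesis P_map : forall pi, P1 pi -> P2 (fun i => g (pi i)).
Hypothesis P_lift : lifts_along P1 P2.
Hypothesis Q_map : forall pi, Q1 pi <-> Q2 (fun i => g (pi i)).

Lemma lift_image pi pi' : (forall i, g (pi' i) = pi i) -> Q1 pi' <-> Q2 pi.
Proof.
  intros Hg. rewrite Q_map.
  replace (fun i => g (pi' i)) with pi by (extensionality i; now rewrite Hg).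
  reflexivity.
Qed.

Lemma exists_along_map u :
  (exists pi, P1 pi /\ pi 0 = u /\ Q1 pi) <-> (exists pi, P2 pi /\ pi 0 = g u /\ Q2 pi).
Proof.
  split.
  - intros (pi & Hpi & <- & HQ). exists (fun i => g (pi i)).
    split; [now apply P_map|]. split; [reflexivity|]. now apply Q_map.
  - intros (pi & Hpi & H0 & HQ). destruct (P_lift u pi Hpi H0) as (pi' & Hpi' & H0' & Hg).
    exists pi'. split; [exact Hpi'|]. split; [exact H0'|]. now apply (lift_image pi).
Qed.

Lemma forall_along_map u :
  (forall pi, P1 pi -> pi 0 = u -> Q1 pi) <-> (forall pi, P2 pi -> pi 0 = g u -> Q2 pi).
Proof.
  split.
  - intros H pi Hpi H0. destruct (P_lift u pi Hpi H0) as (pi' & Hpi' & H0' & Hg).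
    apply (lift_image pi pi' Hg), H; assumption.
  - intros H pi Hpi <-. apply Q_map, H; [now apply P_map | reflexivity].
Qed.

End Quantifiers.

Lemma sat_state_map :
  forall phi u, sat_state K1 u phi <-> sat_state K2 (g u) phi.
Proof.
  apply (sform_mind AP
    (fun phi => forall u, sat_state K1 u phi <-> sat_state K2 (g u) phi)
    (fun psi => forall pi i,
       sat_path K1 pi i psi <-> sat_path K2 (fun k => g (pi k)) i psi));
    cbn [sat_state sat_path]; intros.
  all: try (setoid_rewrite H; try setoid_rewrite H0; reflexivity).
  - apply g_label.
  - apply (exists_along_map _ _ _ _ is_path_map g_lifts_paths (fun pi => H pi 0)).
  - apply (forall_along_map _ _ _ _ is_path_map g_lifts_paths (fun pi => H pi 0)).
  - apply (exists_along_map _ _ _ _ is_cycle_map g_lifts_cycles (fun pi => H pi 0)).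
  - apply (forall_along_map _ _ _ _ is_cycle_map g_lifts_cycles (fun pi => H pi 0)).
Qed.

End SatTransfer.

Fixpoint cycle_base {X : Type} (l : list (X * bool)) : option (list (X * bool)) :=
  match l with
  | nil => None
  | (_, b) :: l' => if b then Some l' else cycle_base l'
  end.

Lemma cycle_base_suffix {X : Type} (l s : list (X * bool)) :
  cycle_base l = Some s -> exists pre, pre <> nil /\ l = pre ++ s.
Proof.
  induction l as [|[x []] l IH]; cbn; [discriminate| |].
  - intros [= <-]. now exists ((x, true) :: nil).
  - intros Hs. destruct (IH Hs) as (pre & _ & ->). now exists ((x, false) :: pre).
Qed.

Lemma cycle_base_intermediate {X : Type} (pre mid s : list (X * bool)) :
  mid <> nil -> cycle_base (pre ++ mid ++ s) = Some s -> cycle_base (mid ++ s) = Some s.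
Proof.
  intros Hmid. induction pre as [|[x []] pre IH]; cbn; [easy| |exact IH].
  intros [= Hs]. apply (f_equal (@length _)) in Hs. rewrite !length_app in Hs.
  destruct mid; [contradiction|]. cbn in Hs. lia.
Qed.

Lemma cantor_to_nat_inj (p q : nat * nat) : Cantor.to_nat p = Cantor.to_nat q -> p = q.
Proof.
  intros Hpq. now rewrite <- (Cantor.cancel_of_to p), <- (Cantor.cancel_of_to q), Hpq.
Qed.

Fixpoint encode_list (l : list (nat * bool)) : nat :=
  match l with
  | nil => 0
  | (x, b) :: l' => S (Cantor.to_nat (Cantor.to_nat (x, Nat.b2n b), encode_list l'))
  end.

Lemma encode_list_inj (l1 l2 : list (nat * bool)) : encode_list l1 = encode_list l2 -> l1 = l2.
Proof.
  revert l2. induction l1 as [|[x b] l1 IH]; intros [|[y c] l2]; cbn [encode_list]; try easy.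
  intros Hcode. apply Nat.succ_inj, cantor_to_nat_inj, pair_equal_spec in Hcode as [Hxb Hl].
  apply cantor_to_nat_inj in Hxb as [= -> Hbc].
  apply IH in Hl as ->. now destruct b, c.
Qed.

Section Unfolding.
Context {AP : Type} (K : Kripke AP).

(* A walk from [wI K], listed from its last step back to its first; the flag of
   a step records whether it opens a cycle segment. *)
Definition walk : Type := list (W K * bool).

Definition endpoint (l : walk) : W K :=
  match l with nil => wI K | (x, _) :: _ => x end.

Fixpoint is_walk (l : walk) : Prop :=
  match l with nil => True | (x, _) :: l' => R K (endpoint l') x /\ is_walk l' end.

Definition node : Type := {l : walk | is_walk l}.

Definition world (u : node) : W K := endpoint (proj1_sig u).

Definition root : node := exist is_walk nil I.

Definition tree_edge (u v : node) : Prop :=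
  exists x b, proj1_sig v = (x, b) :: proj1_sig u.

Definition back_edge (u v : node) : Prop :=
  cycle_base (proj1_sig u) = Some (proj1_sig v) /\ R K (world u) (world v).

Definition back_target (u : node) : option node :=
  match excluded_middle_informative (exists v, back_edge u v) with
  | left H => Some (proj1_sig (constructive_indefinite_description _ H))
  | right _ => None
  end.

Definition unfold_edge (u v : node) : Prop := tree_edge u v \/ back_target u = Some v.

Lemma node_eq (u v : node) : proj1_sig u = proj1_sig v -> u = v.
Proof. destruct u, v. cbn. intros ->. apply subset_eq_compat, eq_refl. Qed.

Lemma back_target_spec u v : back_target u = Some v <-> back_edge u v.
Proof.
  unfold back_target. destruct excluded_middle_informative as [Hex|Hno].
  - destruct constructive_indefinite_description as [v' Hv']. cbn. split.
    + now intros [= <-].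
    + intros [Hv _]. f_equal. apply node_eq. destruct Hv' as [Hv' _].
      rewrite Hv in Hv'. now injection Hv'.
  - split; [discriminate|]. intros Hv. exfalso. eauto.
Qed.

Lemma unfold_edge_total u : exists v, unfold_edge u v.
Proof.
  destruct (R_total K (world u)) as [x Hx].
  exists (exist is_walk ((x, false) :: proj1_sig u) (conj Hx (proj2_sig u))).
  left. now exists x, false.
Qed.

Lemma node_countable : exists enc : node -> nat, forall u v, enc u = enc v -> u = v.
Proof.
  destruct (W_countable K) as [enc Henc].
  exists (fun u => encode_list (map (fun '(x, b) => (enc x, b)) (proj1_sig u))).
  intros [l Hl] [l' Hl'] Huv. apply encode_list_inj in Huv. apply node_eq. cbn in *.
  clear Hl Hl'. revert l' Huv.
  induction l as [|[x b] l IH]; intros [|[y c] l']; cbn; try easy.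
  intros [= Hxy -> Hl]. apply Henc in Hxy as ->. now rewrite (IH l').
Qed.

Definition unfold : Kripke AP :=
  @mkKripke AP node unfold_edge (fun u => L K (world u)) root node_countable unfold_edge_total.

Lemma tree_ancestor_iff u v :
  clos_trans node tree_edge u v <-> exists pre, pre <> nil /\ proj1_sig v = pre ++ proj1_sig u.
Proof.
  split.
  - induction 1 as [u v (x & b & Hv)|u w v _ (pre1 & Hpre1 & Hw) _ (pre2 & Hpre2 & Hv)].
    + now exists ((x, b) :: nil).
    + exists (pre2 ++ pre1). split; [now destruct pre2|]. now rewrite Hv, Hw, app_assoc.
  - intros (pre & Hpre & Hv). revert v Hv.
    induction pre as [|[x b] pre IH]; intros v Hv; [contradiction|].
    destruct pre as [|y pre]; [apply t_step; now exists x, b|].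
    assert (Hmid : is_walk ((y :: pre) ++ proj1_sig u)).
    { generalize (proj2_sig v). rewrite Hv. now intros [_ H]. }
    apply t_trans with (exist _ _ Hmid).
    + now apply IH.
    + apply t_step. exists x, b. exact Hv.
Qed.

Lemma tree_edge_rooted : is_rooted_tree tree_edge root.
Proof.
  split; [|split].
  - intros u (x & b & Hroot). discriminate.
  - intros [[|[x b] l] Hl] Hroot; [now contradict Hroot; apply node_eq|].
    exists (exist is_walk l (proj2 Hl)). split; [now exists x, b|].
    intros p (x' & b' & Hp). apply node_eq. cbn in Hp. now injection Hp.
  - intros [[|y l] Hl].
    + destruct Hl. apply rt_refl.
    + apply clos_t_clos_rt, tree_ancestor_iff. exists (y :: l). split; [easy|].
      cbn. now rewrite app_nil_r.
Qed.

Lemma unfold_tree_with_back_edges : tree_with_back_edges unfold.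
Proof.
  exists tree_edge, back_target. split; [exact tree_edge_rooted|]. split; [|split].
  - reflexivity.
  - intros w v [Hbase _]%back_target_spec. apply tree_ancestor_iff, cycle_base_suffix, Hbase.
  - intros w1 w2 v1 v2 [Hb1 _]%back_target_spec [Hb2 _]%back_target_spec
      (pre1 & Hpre1 & Hw1)%tree_ancestor_iff (pre2 & _ & Hw2)%tree_ancestor_iff.
    apply node_eq. rewrite Hw2, Hw1 in Hb2. apply cycle_base_intermediate in Hb2; [|exact Hpre1].
    rewrite <- Hw1, Hb1 in Hb2. now injection Hb2.
Qed.

Lemma world_unfold_edge u v : unfold_edge u v -> R K (world u) (world v).
Proof.
  intros [(x & b & Hv) | [_ Hedge]%back_target_spec]; [|exact Hedge].
  generalize (proj2_sig v). unfold world. rewrite Hv. now intros [H _].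
Qed.

Section Lifting.
Variables (t : node) (pi : nat -> W K).
Hypothesis pi_path : is_path K pi.
Hypothesis pi_start : pi 0 = world t.

Definition walk_along (l : nat -> walk) : Prop :=
  forall i, is_walk (l i) /\ endpoint (l i) = pi i.

Lemma walk_along_lift l : walk_along l -> l 0 = proj1_sig t ->
  exists pi', (forall i, proj1_sig (pi' i) = l i) /\ pi' 0 = t /\ forall i, world (pi' i) = pi i.
Proof.
  intros Hl Hl0. exists (fun i => exist is_walk (l i) (proj1 (Hl i))). split; [easy|]. split.
  - now apply node_eq.
  - intros i. apply Hl.
Qed.

Fixpoint path_walk (i : nat) : walk :=
  match i with 0 => proj1_sig t | S i' => (pi (S i'), false) :: path_walk i' end.

Lemma path_walk_along : walk_along path_walk.
Proof.
  intros i. induction i as [|i [Hwalk Hend]]; cbn.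
  - split; [exact (proj2_sig t) | symmetry; exact pi_start].
  - split; [|easy]. split; [|exact Hwalk]. rewrite Hend. apply pi_path.
Qed.

Lemma lift_path : exists pi', is_path unfold pi' /\ pi' 0 = t /\ forall i, world (pi' i) = pi i.
Proof.
  destruct (walk_along_lift path_walk path_walk_along eq_refl) as (pi' & Hl & H0 & Hworld).
  exists pi'. split; [|easy]. intros i. left. exists (pi (S i)), false.
  now rewrite !Hl.
Qed.

Section CycleLifting.
Variable next_return : nat -> nat.
Hypothesis next_return_spec : forall s, S s < next_return s /\ pi (next_return s) = pi 0.

(* The state [(l, s, n)] at time [i]: the current walk [l], the last time [s] at
   which the unrolling restarted from [t], and the next restart time [n]. The
   step leaving [s] opens the segment that the back edge at time [n - 1] closes. *)
Fixpoint cycle_state (i : nat) : walk * nat * nat :=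
  match i with
  | 0 => (proj1_sig t, 0, next_return 0)
  | S i' => let '(l, s, n) := cycle_state i' in
            if S i' =? n then (proj1_sig t, S i', next_return (S i'))
            else ((pi (S i'), i' =? s) :: l, s, n)
  end.

Definition cycle_walk (i : nat) : walk := fst (fst (cycle_state i)).

Definition cycle_state_ok (i : nat) (c : walk * nat * nat) : Prop :=
  let '(l, s, n) := c in
  s <= i < n /\ n = next_return s /\ is_walk l /\ endpoint l = pi i /\
  (i = s -> l = proj1_sig t) /\ (s < i -> cycle_base l = Some (proj1_sig t)).

Lemma cycle_state_invariant i : cycle_state_ok i (cycle_state i).
Proof.
  induction i as [|i IH]; cbn [cycle_state].
  - destruct (next_return_spec 0). repeat split; try easy || lia. exact (proj2_sig t).
  - destruct (cycle_state i) as [[l s] n].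
    destruct IH as ([Hsi Hin] & Hn & Hwalk & Hend & Hfresh & Hbase).
    destruct (Nat.eqb_spec (S i) n) as [Hreturn|Hstay].
    + destruct (next_return_spec (S i)), (next_return_spec s) as [_ Hreturn_start].
      repeat split; try easy || lia.
      * exact (proj2_sig t).
      * rewrite Hreturn, Hn, Hreturn_start. symmetry. exact pi_start.
    + repeat split; try easy || lia.
      * rewrite Hend. apply pi_path.
      * intros _. cbn. destruct (Nat.eqb_spec i s); [now rewrite Hfresh | apply Hbase; lia].
Qed.

Lemma cycle_walk_along : walk_along cycle_walk.
Proof.
  intros i. generalize (cycle_state_invariant i). unfold cycle_walk.
  destruct (cycle_state i) as [[l s] n]. intros (_ & _ & Hwalk & Hend & _). now split.
Qed.

Lemma cycle_walk_step i :
  cycle_base (cycle_walk i) = Some (cycle_walk (S i)) \/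
  exists b, cycle_walk (S i) = (pi (S i), b) :: cycle_walk i.
Proof.
  generalize (cycle_state_invariant i). unfold cycle_walk. cbn [cycle_state].
  destruct (cycle_state i) as [[l s] n]. intros ([Hsi Hin] & Hn & _ & _ & _ & Hbase).
  destruct (Nat.eqb_spec (S i) n) as [Hreturn|Hstay].
  - left. apply Hbase. destruct (next_return_spec s). lia.
  - right. eexists. reflexivity.
Qed.

Lemma cycle_state_stay i l s n j :
  cycle_state i = (l, s, n) -> i <= j < n -> exists l', cycle_state j = (l', s, n).
Proof.
  intros Hi. induction j as [|j IH]; intros Hj.
  - replace i with 0 in Hi by lia. eauto.
  - destruct (Nat.eq_dec i (S j)) as [<-|Hij]; [eauto|].
    destruct IH as [l' Hl']; [lia|]. cbn [cycle_state]. rewrite Hl'.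
    destruct (Nat.eqb_spec (S j) n); [lia | eauto].
Qed.

Lemma cycle_walk_returns i : exists n, i < n /\ cycle_walk n = proj1_sig t.
Proof.
  generalize (cycle_state_invariant i). destruct (cycle_state i) as [[l s] n] eqn:Hi.
  intros ([_ Hin] & _). exists n. split; [exact Hin|].
  destruct (cycle_state_stay i l s n (n - 1) Hi) as [l' Hl']; [lia|].
  unfold cycle_walk. replace n with (S (n - 1)) at 1 by lia.
  cbn [cycle_state]. rewrite Hl'.
  destruct (Nat.eqb_spec (S (n - 1)) n); [reflexivity | lia].
Qed.

Lemma lift_cycle : exists pi', is_cycle unfold pi' /\ pi' 0 = t /\ forall i, world (pi' i) = pi i.
Proof.
  destruct (walk_along_lift cycle_walk cycle_walk_along eq_refl) as (pi' & Hl & H0 & Hworld).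
  exists pi'. split; [split|easy].
  - intros i. destruct (cycle_walk_step i) as [Hback | [b Htree]].
    + right. apply back_target_spec. split; [now rewrite !Hl|].
      rewrite !Hworld. apply pi_path.
    + left. exists (pi (S i)), b. now rewrite !Hl.
  - intros i. destruct (cycle_walk_returns i) as (n & Hin & Hn). exists n. split; [exact Hin|].
    apply node_eq. now rewrite Hl, H0.
Qed.

End CycleLifting.
End Lifting.

Lemma unfold_lifts_paths : lifts_along unfold K world (is_path unfold) (is_path K).
Proof. intros u pi Hpi H0. now apply lift_path. Qed.

Lemma unfold_lifts_cycles : lifts_along unfold K world (is_cycle unfold) (is_cycle K).
Proof.
  intros u pi [Hpi Hret] H0.
  assert (Hnext : forall s, {n | S s < n /\ pi n = pi 0}).
  { intros s. apply constructive_indefinite_description, Hret. }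
  exact (lift_cycle u pi Hpi H0 (fun s => proj1_sig (Hnext s)) (fun s => proj2_sig (Hnext s))).
Qed.

Lemma sat_state_unfold phi u : sat_state unfold u phi <-> sat_state K (world u) phi.
Proof.
  apply sat_state_map.
  - reflexivity.
  - exact world_unfold_edge.
  - exact unfold_lifts_paths.
  - exact unfold_lifts_cycles.
Qed.

End Unfolding.

Theorem mainTheorem4 (AP : Type) (HAP : exists l : list AP, forall a : AP, In a l)
  (phi : sform AP) :
  satisfiable phi ->
  exists K : Kripke AP, tree_with_back_edges K /\ models K phi.
Proof.
  intros [K HK]. exists (unfold K). split.
  - apply unfold_tree_with_back_edges.
  - apply sat_state_unfold. exact HK.
Qed.
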